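(* Let $\mathbb{Z} = \langle g\rangle$ act freely and cospecially on a CAT(0) cube complex $X$ by combinatorial isometries. Let $x\in X^{(0)}$ be a vertex and $p$ its projection onto $\mathrm{Min}(g)$. Then there exists a geodesic edge path from $x$ to $gx$ which passes through the vertices $p$ and $gp$.
   Context: $\mathrm{Min}(g)$ is the subcomplex spanned by the vertices $x$ minimizing the combinatorial distance $d(x,gx)$; it is a convex subcomplex. For a convex subcomplex $A$ and a vertex $x$, the projection $\pi_A(x)$ is the unique vertex of $A$ such that for every vertex $a$ of $A$, $d(x,a)=d(x,\pi_A(x))+d(\pi_A(x),a)$. Geodesic edge paths are geodesics in the 1-skeleton. An action is cospecial if the quotient cube complex is special in the sense of Haglund–Wise. *)

From Stdlib Require Import List Relations.
Import ListNotations.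

(* walk adj x p y : x, p_1, ..., p_n = y is an edge path; its length is
   length p and its vertex sequence is x :: p. *)
Inductive walk {V : Type} (adj : V -> V -> Prop) : V -> list V -> V -> Prop :=
| walk_nil x : walk adj x nil x
| walk_cons x y p z : adj x y -> walk adj y p z -> walk adj x (y :: p) z.

Definition geodesic {V : Type} (adj : V -> V -> Prop) (x : V) (p : list V) (y : V) : Prop :=
  walk adj x p y /\ forall q, walk adj x q y -> length p <= length q.

Definition dist {V : Type} (adj : V -> V -> Prop) (x y : V) (n : nat) : Prop :=
  exists p, geodesic adj x p y /\ length p = n.

Definition in_interval {V : Type} (adj : V -> V -> Prop) (x y m : V) : Prop :=
  exists p, geodesic adj x p y /\ In m (x :: p).

(* By the theorem of Chepoi /
   Roller / Gerasimov these are exactly the 1-skeleta of CAT(0) cube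
   complexes, and the CAT(0) cube complex is recovered from its 1-skeleton
   by filling in every cube subgraph. *)
Definition median_graph {V : Type} (adj : V -> V -> Prop) : Prop :=
  (forall u v, adj u v -> adj v u) /\
  (forall u, ~ adj u u) /\
  (forall x y, exists p, walk adj x p y) /\
  (forall x y z, exists m,
      in_interval adj x y m /\ in_interval adj y z m /\ in_interval adj x z m /\
      forall m', in_interval adj x y m' -> in_interval adj y z m' ->
                 in_interval adj x z m' -> m' = m).

(* combinatorial isometry = automorphism of the cube complex = graph
   automorphism of its 1-skeleton *)
Definition graph_automorphism {V : Type} (adj : V -> V -> Prop) (g : V -> V) : Prop :=
  (exists h : V -> V, (forall v, h (g v) = v) /\ (forall v, g (h v) = v)) /\
  (forall u v, adj u v <-> adj (g u) (g v)).

(* the action of Z = <g> is free: g^n x <> x for n <> 0 (it suffices to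
   consider n > 0, since g^(-n) x = x iff g^n x = x). *)
Definition free_Zaction {V : Type} (g : V -> V) : Prop :=
  forall (n : nat) (x : V), 0 < n -> Nat.iter n g x <> x.

Definition square {V : Type} (adj : V -> V -> Prop) (a b c d : V) : Prop :=
  adj a b /\ adj b c /\ adj c d /\ adj d a /\ a <> c /\ b <> d.

(* oriented edges are pairs (u,v) with adj u v.
   Elementary parallelism: in the square a-b-c-d, the oriented edge (a,b)
   is parallel to the opposite oriented edge (d,c). *)
Definition opp_step {V : Type} (adj : V -> V -> Prop) (e f : V * V) : Prop :=
  exists a b c d, square adj a b c d /\ e = (a, b) /\ f = (d, c).

Definition g_step {V : Type} (g : V -> V) (e f : V * V) : Prop :=
  f = (g (fst e), g (snd e)).

(* Oriented parallelism in the quotient Y = X/<g>, read on lifts: two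
   oriented edges of X are related iff their images in Y are oriented-dual
   to the same hyperplane of Y with the same orientation, i.e. the
   equivalence relation generated by square-parallelism and the action. *)
Definition qpar {V : Type} (adj : V -> V -> Prop) (g : V -> V) : relation (V * V) :=
  clos_refl_sym_trans (V * V) (fun e f => opp_step adj e f \/ g_step g e f).

(* unoriented version: the images are dual to the same hyperplane of Y *)
Definition qupar {V : Type} (adj : V -> V -> Prop) (g : V -> V) (e f : V * V) : Prop :=
  qpar adj g e f \/ qpar adj g e (snd f, fst f).

Definition corner {V : Type} (adj : V -> V -> Prop) (a b c : V) : Prop :=
  exists d, square adj b a c d.

Definition q_self_intersection {V : Type} (adj : V -> V -> Prop) (g : V -> V) : Prop :=
  exists a b c, corner adj a b c /\ qupar adj g (a, b) (a, c).

Definition q_one_sided {V : Type} (adj : V -> V -> Prop) (g : V -> V) : Prop :=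
  exists u v, adj u v /\ qpar adj g (u, v) (v, u).

Definition q_direct_self_osculation {V : Type} (adj : V -> V -> Prop) (g : V -> V) : Prop :=
  exists a b c, adj a b /\ adj a c /\ b <> c /\ ~ corner adj a b c /\
    (qpar adj g (a, b) (a, c) \/ qpar adj g (b, a) (c, a)).

Definition q_inter_osculation {V : Type} (adj : V -> V -> Prop) (g : V -> V) : Prop :=
  exists a b c a' b' c',
    corner adj a b c /\ ~ qupar adj g (a, b) (a, c) /\
    adj a' b' /\ adj a' c' /\ b' <> c' /\ ~ corner adj a' b' c' /\
    qupar adj g (a, b) (a', b') /\ qupar adj g (a, c) (a', c').

(* Z = <g> acts freely and cospecially: free, and the quotient cube complex
   X/<g> is special in the sense of Haglund--Wise. *)
Definition cospecial_Zaction {V : Type} (adj : V -> V -> Prop) (g : V -> V) : Prop :=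
  free_Zaction g /\
  ~ q_self_intersection adj g /\ ~ q_one_sided adj g /\
  ~ q_direct_self_osculation adj g /\ ~ q_inter_osculation adj g.

Definition in_Min {V : Type} (adj : V -> V -> Prop) (g : V -> V) (x : V) : Prop :=
  forall y n m, dist adj x (g x) n -> dist adj y (g y) m -> n <= m.

Definition is_projection {V : Type} (adj : V -> V -> Prop) (A : V -> Prop) (x p : V) : Prop :=
  A p /\ forall a n1 n2 n3, A a -> dist adj x a n1 -> dist adj x p n2 ->
                            dist adj p a n3 -> n1 = n2 + n3.

From Stdlib Require Import List Relations Lia Classical ClassicalEpsilon PeanoNat Wf_nat.
Import ListNotations.

(* Let [xx'] be the first edge of a geodesic from [x] to its projection [p] onto Min(g), so
   that Min(g) lies on the side of [x'] of the hyperplane H dual to [xx'].  Because the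
   hyperplanes of X/<g> neither self-intersect nor are one-sided, the translate gH cannot
   cross H, cannot be H with reversed orientation, and cannot be H itself (the gate of [p] in
   the carrier of H would then be in Min(g), and so would its neighbour across H); nor can gH
   and H be strictly nested, since some iterate of [p] would then leave the side of [x'].
   Hence H separates [x] from [gx] and gH separates [x'] from [gx'], so that
   d(x,gx) = d(x',gx') + 2.  By induction d(x,gx) = 2 d(x,p) + d(p,gp), and the geodesics
   x -> p -> gp -> gx concatenate to a geodesic. *)

Lemma ex_least_nat (P : nat -> Prop) :
  (exists n, P n) -> exists n, P n /\ forall k, P k -> n <= k.
Proof.
  intros HP.
  destruct (dec_inh_nat_subset_has_unique_least_element P (fun n => classic (P n)) HP)
    as [n [Hn _]].
  exists n; exact Hn.
Qed.

Section MedianGraph.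
Variables (V : Type) (adj : V -> V -> Prop).
Hypothesis Hmed : median_graph adj.

Lemma adj_sym u v : adj u v -> adj v u.
Proof. apply Hmed. Qed.

Lemma adj_irrefl u : ~ adj u u.
Proof. apply Hmed. Qed.

Lemma walk_app x p y q z : walk adj x p y -> walk adj y q z -> walk adj x (p ++ q) z.
Proof. induction 1; simpl; auto. intros; econstructor; eauto. Qed.

Lemma walk_rev x p y : walk adj x p y -> exists q, walk adj y q x /\ length q = length p.
Proof.
  induction 1 as [x|x y p z Hxy _ [q [Hq Hl]]].
  - exists nil; split; [constructor | reflexivity].
  - exists (q ++ [x]); split.
    + apply walk_app with y; auto. econstructor; [apply adj_sym; exact Hxy | constructor].
    + rewrite length_app; simpl; lia.
Qed.

Lemma walk_split x p y m : walk adj x p y -> In m (x :: p) ->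
  exists p1 p2, walk adj x p1 m /\ walk adj m p2 y /\ length p1 + length p2 = length p.
Proof.
  induction 1 as [x|x y p z Hxy Hw IH]; intros Hin.
  - destruct Hin as [<-|[]]. exists nil, nil; repeat split; constructor.
  - destruct Hin as [<-|Hin].
    + exists nil, (y :: p); repeat split; [constructor | econstructor; eauto].
    + destruct (IH Hin) as [p1 [p2 [H1 [H2 Hl]]]].
      exists (y :: p1), p2; repeat split; auto; [econstructor; eauto | simpl; lia].
Qed.

Lemma walk_end_in x p y : walk adj x p y -> In y (x :: p).
Proof. induction 1; simpl in *; [auto|]. destruct IHwalk; subst; auto. Qed.

Lemma dist_exists x y : exists n, dist adj x y n.
Proof.
  destruct (ex_least_nat (fun n => exists p, walk adj x p y /\ length p = n))
    as [n [[p [Hp Hl]] Hmin]].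
  - destruct Hmed as (_ & _ & Hconn & _). destruct (Hconn x y) as [p Hp]. eauto.
  - exists n, p. repeat split; auto. intros q Hq. rewrite Hl. apply Hmin; eauto.
Qed.

Definition gdist x y : nat :=
  proj1_sig (constructive_indefinite_description _ (dist_exists x y)).

Lemma dist_gdist x y : dist adj x y (gdist x y).
Proof. unfold gdist. destruct constructive_indefinite_description; auto. Qed.

Lemma walk_gdist x y : exists p, walk adj x p y /\ length p = gdist x y.
Proof. destruct (dist_gdist x y) as [p [[Hp _] Hl]]; eauto. Qed.

Lemma gdist_le_walk x p y : walk adj x p y -> gdist x y <= length p.
Proof. intros Hw. destruct (dist_gdist x y) as [q [[_ Hmin] <-]]. auto. Qed.

Lemma dist_eq_gdist x y n : dist adj x y n -> n = gdist x y.
Proof.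
  intros [p [[Hp Hmin] <-]]. destruct (dist_gdist x y) as [q [[Hq Hmin'] <-]].
  specialize (Hmin _ Hq). specialize (Hmin' _ Hp). lia.
Qed.

Lemma geodesic_gdist x p y : walk adj x p y -> length p = gdist x y -> geodesic adj x p y.
Proof. intros Hw Hl. split; auto. intros q Hq. rewrite Hl. apply gdist_le_walk; auto. Qed.

Lemma gdist_xx x : gdist x x = 0.
Proof. pose proof (gdist_le_walk x nil x (walk_nil _ x)). simpl in *; lia. Qed.

Lemma gdist_eq0 x y : gdist x y = 0 -> x = y.
Proof.
  intros H. destruct (walk_gdist x y) as [p [Hp Hl]].
  destruct Hp; simpl in *; [reflexivity | lia].
Qed.

Lemma gdist_sym x y : gdist x y = gdist y x.
Proof.
  destruct (walk_gdist x y) as [p [Hp Hl]]. destruct (walk_gdist y x) as [q [Hq Hl']].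
  destruct (walk_rev _ _ _ Hp) as [p' [Hp' E]]. destruct (walk_rev _ _ _ Hq) as [q' [Hq' E']].
  pose proof (gdist_le_walk _ _ _ Hp'). pose proof (gdist_le_walk _ _ _ Hq'). lia.
Qed.

Lemma gdist_triangle x y z : gdist x z <= gdist x y + gdist y z.
Proof.
  destruct (walk_gdist x y) as [p [Hp Hl]]. destruct (walk_gdist y z) as [q [Hq Hl']].
  pose proof (gdist_le_walk _ _ _ (walk_app _ _ _ _ _ Hp Hq)). rewrite length_app in *. lia.
Qed.

Lemma gdist_adj x y : adj x y -> gdist x y = 1.
Proof.
  intros H. pose proof (gdist_le_walk x [y] y (walk_cons _ _ _ _ _ H (walk_nil _ y))).
  simpl in *. destruct (gdist x y) eqn:E; [|lia].
  apply gdist_eq0 in E; subst. exfalso; eapply adj_irrefl; eauto.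
Qed.

Lemma gdist_succ x y n : gdist x y = S n -> exists x1, adj x x1 /\ gdist x1 y = n.
Proof.
  intros H. destruct (walk_gdist x y) as [p [Hp Hl]].
  destruct Hp as [|x y' p z Ha Hw]; simpl in *; [lia|].
  exists y'. split; auto. pose proof (gdist_le_walk _ _ _ Hw). pose proof (gdist_triangle x y' z).
  rewrite (gdist_adj _ _ Ha) in *. lia.
Qed.

Lemma gdist_eq1 x y : gdist x y = 1 -> adj x y.
Proof.
  intros H. destruct (gdist_succ _ _ _ H) as [x1 [Ha E]]. apply gdist_eq0 in E; subst; auto.
Qed.

Lemma gdist_neq x y : x <> y -> exists n, gdist x y = S n.
Proof. intros N. destruct (gdist x y) eqn:E; eauto. apply gdist_eq0 in E; contradiction. Qed.

Lemma in_interval_gdist x y m : in_interval adj x y m <-> gdist x m + gdist m y = gdist x y.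
Proof.
  split.
  - intros [p [[Hp Hmin] Hin]]. destruct (walk_split _ _ _ _ Hp Hin) as [p1 [p2 [H1 [H2 Hl]]]].
    pose proof (gdist_le_walk _ _ _ H1). pose proof (gdist_le_walk _ _ _ H2).
    pose proof (gdist_triangle x m y).
    pose proof (dist_eq_gdist x y (length p) (ex_intro _ p (conj (conj Hp Hmin) eq_refl))). lia.
  - intros E. destruct (walk_gdist x m) as [p [Hp Hl]]. destruct (walk_gdist m y) as [q [Hq Hl']].
    exists (p ++ q). split.
    + apply geodesic_gdist; [eapply walk_app; eauto | rewrite length_app; lia].
    + destruct (walk_end_in _ _ _ Hp) as [<-|Hin]; [left; reflexivity|].
      right. apply in_or_app. auto.
Qed.

Lemma median_gdist x y z : exists m,
  gdist x m + gdist m y = gdist x y /\ gdist y m + gdist m z = gdist y z /\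
  gdist x m + gdist m z = gdist x z.
Proof.
  destruct Hmed as (_ & _ & _ & Hmedian). destruct (Hmedian x y z) as [m (H1 & H2 & H3 & _)].
  exists m. rewrite <- !in_interval_gdist. auto.
Qed.

Lemma median_unique x y z m m' :
  gdist x m + gdist m y = gdist x y -> gdist y m + gdist m z = gdist y z ->
  gdist x m + gdist m z = gdist x z ->
  gdist x m' + gdist m' y = gdist x y -> gdist y m' + gdist m' z = gdist y z ->
  gdist x m' + gdist m' z = gdist x z -> m = m'.
Proof.
  destruct Hmed as (_ & _ & _ & Hmedian). destruct (Hmedian x y z) as [m0 (_ & _ & _ & U)].
  intros; rewrite (U m), (U m'); auto; apply in_interval_gdist; auto.
Qed.

Lemma adj_gdist_succ u v w : adj u v ->
  gdist w v = S (gdist w u) \/ gdist w u = S (gdist w v).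
Proof.
  intros H. pose proof (gdist_adj _ _ H). pose proof (gdist_triangle w u v).
  pose proof (gdist_triangle w v u). pose proof (gdist_sym u v).
  destruct (Nat.eq_dec (gdist w u) (gdist w v)) as [Eq|]; [|lia]. exfalso.
  destruct (median_gdist u v w) as [m (M1 & M2 & M3)].
  pose proof (gdist_sym w u). pose proof (gdist_sym w v).
  assert (gdist u m = 0 \/ gdist m v = 0) as [Z|Z] by lia;
    apply gdist_eq0 in Z; subst; rewrite gdist_xx in *; lia.
Qed.

Lemma gdist_path2 a b c : adj a b -> adj b c -> a <> c -> gdist a c = 2.
Proof.
  intros H1 H2 N. pose proof (gdist_triangle a b c).
  rewrite (gdist_adj _ _ H1), (gdist_adj _ _ H2) in *.
  destruct (gdist a c) as [|[|[|]]] eqn:E; try lia.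
  - apply gdist_eq0 in E; contradiction.
  - apply gdist_eq1 in E. pose proof (gdist_adj _ _ (adj_sym _ _ H1)).
    pose proof (gdist_adj _ _ H2). destruct (adj_gdist_succ a c b E); lia.
Qed.

(* Both [a] and [c] are medians of [b], [e], [m]. *)
Lemma no_K23 a c b e m : a <> c -> b <> e -> b <> m -> e <> m ->
  adj a b -> adj b c -> adj a e -> adj e c -> adj a m -> adj m c -> False.
Proof.
  intros Nac Nbe Nbm Nem Hab Hbc Hae Hec Ham Hmc.
  pose proof (gdist_path2 b a e (adj_sym _ _ Hab) Hae Nbe).
  pose proof (gdist_path2 b a m (adj_sym _ _ Hab) Ham Nbm).
  pose proof (gdist_path2 e a m (adj_sym _ _ Hae) Ham Nem).
  pose proof (gdist_path2 b c e Hbc (adj_sym _ _ Hec) Nbe).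
  pose proof (gdist_path2 b c m Hbc (adj_sym _ _ Hmc) Nbm).
  pose proof (gdist_path2 e c m Hec (adj_sym _ _ Hmc) Nem).
  assert (Hd : forall x y, adj x y -> gdist x y = 1 /\ gdist y x = 1)
    by (intros x y Hxy; split; apply gdist_adj; auto using adj_sym).
  destruct (Hd _ _ Hab), (Hd _ _ Hbc), (Hd _ _ Hae), (Hd _ _ Hec), (Hd _ _ Ham), (Hd _ _ Hmc).
  apply Nac. apply (median_unique b e m); lia.
Qed.

(* For an edge [uv], the side of [u] of the hyperplane dual to [uv]. *)
Definition halfspace u v z : Prop := gdist z v = S (gdist z u).

Lemma halfspace_disjoint u v z : halfspace u v z -> halfspace v u z -> False.
Proof. unfold halfspace; lia. Qed.

Lemma halfspace_cases u v z : adj u v -> halfspace u v z \/ halfspace v u z.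
Proof. unfold halfspace; intros H; destruct (adj_gdist_succ u v z H); auto. Qed.

Lemma halfspace_compl u v z : adj u v -> ~ halfspace u v z -> halfspace v u z.
Proof. intros H N. destruct (halfspace_cases u v z H); tauto. Qed.

Lemma halfspace_self u v : adj u v -> halfspace u v u.
Proof. unfold halfspace; intros H. rewrite gdist_xx, gdist_adj; auto. Qed.

Lemma square_halfspace a b c e w : square adj a b c e -> halfspace a b w -> halfspace e c w.
Proof.
  unfold halfspace. intros (Hab & Hbc & Hce & Hea & Nac & Nbe) Hw.
  pose proof (adj_gdist_succ _ _ w Hea). pose proof (adj_gdist_succ _ _ w Hbc).
  pose proof (adj_gdist_succ _ _ w Hce).
  destruct (Nat.eq_dec (gdist w c) (S (gdist w e))) as [|Ne]; auto. exfalso.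
  assert (Hc : gdist w c = gdist w a /\ gdist w e = S (gdist w a)) by lia.
  destruct Hc as [Hc He].
  destruct (median_gdist a c w) as [m (M1 & M2 & M3)].
  pose proof (gdist_path2 a b c Hab Hbc Nac).
  pose proof (gdist_sym w a). pose proof (gdist_sym w c). pose proof (gdist_sym c m).
  pose proof (gdist_sym m w).
  assert (Ham : gdist a m = 1) by lia. assert (Hmc : gdist m c = 1) by lia.
  apply gdist_eq1 in Ham. apply gdist_eq1 in Hmc.
  apply (no_K23 a c b e m); auto using adj_sym; intros ->; lia.
Qed.

Lemma square_rev a b c e : square adj a b c e -> square adj e c b a.
Proof. intros (? & ? & ? & ? & ? & ?). repeat split; auto using adj_sym. Qed.

Lemma ladder_step u v u' v' k : adj u v -> adj u' v' ->
  gdist u u' = S k -> gdist v v' = S k -> gdist u v' = S (S k) -> gdist v u' = S (S k) ->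
  exists w m, adj w m /\ gdist u w = k /\ gdist v m = k /\ gdist u m = S k /\
    gdist v w = S k /\ square adj u' v' m w.
Proof.
  intros Huv Hu' E1 E2 E3 E4.
  rewrite gdist_sym in E1. destruct (gdist_succ _ _ _ E1) as [w [Hw Ew]]. rewrite gdist_sym in E1.
  assert (Hd : forall x y, adj x y -> gdist x y = 1 /\ gdist y x = 1)
    by (intros x y Hxy; split; apply gdist_adj; auto using adj_sym).
  destruct (Hd _ _ Huv), (Hd _ _ Hu'), (Hd _ _ Hw).
  pose proof (gdist_sym w u).
  pose proof (gdist_triangle w u' v'). pose proof (gdist_triangle u w v').
  pose proof (gdist_triangle v u w). pose proof (gdist_triangle v w u').
  pose proof (gdist_sym v w). pose proof (gdist_sym w v').
  destruct (median_gdist w v' v) as [m (M1 & M2 & M3)].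
  pose proof (gdist_sym v v'). pose proof (gdist_sym v m). pose proof (gdist_sym m v').
  assert (Hwm : gdist w m = 1) by lia. assert (Hmv : gdist m v' = 1) by lia.
  apply gdist_eq1 in Hwm. apply gdist_eq1 in Hmv.
  pose proof (gdist_triangle u v m). pose proof (gdist_triangle u m v').
  assert (u' <> m) by (intros ->; lia).
  assert (v' <> w) by (intros ->; rewrite gdist_xx in *; lia).
  exists w, m. repeat split; auto; try lia; apply adj_sym; auto.
Qed.

(* Induction on [k] along a ladder of squares joining the two edges. *)
Lemma ladder k : forall u v u' v', adj u v -> adj u' v' ->
  gdist u u' = k -> gdist v v' = k -> gdist u v' = S k -> gdist v u' = S k ->
  (forall z, halfspace u v z <-> halfspace u' v' z) /\
  (forall g, qpar adj g (u, v) (u', v')).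
Proof.
  induction k as [|k IH]; intros u v u' v' Huv Hu' E1 E2 E3 E4.
  - apply gdist_eq0 in E1. apply gdist_eq0 in E2. subst. split; [tauto|]. intros; apply rst_refl.
  - destruct (ladder_step _ _ _ _ _ Huv Hu' E1 E2 E3 E4)
      as [w [m [Hwm (F1 & F2 & F3 & F4 & Sq)]]].
    destruct (IH u v w m Huv Hwm F1 F2 F3 F4) as [K Q]. split.
    + intros z. rewrite K. split; intros Hz.
      * exact (square_halfspace _ _ _ _ z (square_rev _ _ _ _ Sq) Hz).
      * exact (square_halfspace _ _ _ _ z Sq Hz).
    + intros g. eapply rst_trans; [apply Q|]. apply rst_sym, rst_step. left.
      exists u', v', m, w. auto.
Qed.

(* The edge [u'v'] crosses the hyperplane dual to [uv], in the same direction. *)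
Definition parallel u v u' v' : Prop :=
  adj u v /\ adj u' v' /\ halfspace u v u' /\ halfspace v u v'.

Lemma parallel_gdist u v u' v' : parallel u v u' v' -> gdist u u' = gdist v v'.
Proof.
  unfold parallel, halfspace. intros (H1 & H2 & H3 & H4).
  pose proof (gdist_adj _ _ H2). pose proof (gdist_adj _ _ (adj_sym _ _ H2)).
  pose proof (gdist_triangle v v' u'). pose proof (gdist_triangle u u' v').
  pose proof (gdist_sym u u'). pose proof (gdist_sym v v').
  pose proof (gdist_sym v u'). pose proof (gdist_sym u v'). lia.
Qed.

Lemma parallel_ladder u v u' v' : parallel u v u' v' ->
  (forall z, halfspace u v z <-> halfspace u' v' z) /\
  (forall g, qpar adj g (u, v) (u', v')).
Proof.
  intros C. pose proof (parallel_gdist _ _ _ _ C). destruct C as (H1 & H2 & H3 & H4).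
  unfold halfspace in *.
  pose proof (gdist_sym u u'). pose proof (gdist_sym v v').
  pose proof (gdist_sym v u'). pose proof (gdist_sym u v').
  apply (ladder (gdist u u')); auto; lia.
Qed.

Lemma parallel_halfspace u v u' v' : parallel u v u' v' ->
  forall z, halfspace u v z <-> halfspace u' v' z.
Proof. intros C. apply (parallel_ladder _ _ _ _ C). Qed.

Lemma parallel_halfspace_rev u v u' v' : parallel u v u' v' ->
  forall z, halfspace v u z <-> halfspace v' u' z.
Proof.
  intros C z. pose proof (parallel_halfspace _ _ _ _ C z) as E. destruct C as (H1 & H2 & _).
  split; intros Hz.
  - apply halfspace_compl; auto. rewrite <- E. intros N. eapply halfspace_disjoint; eauto.
  - apply halfspace_compl; auto. rewrite E. intros N. eapply halfspace_disjoint; eauto.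
Qed.

Lemma parallel_qpar u v u' v' g : parallel u v u' v' -> qpar adj g (u, v) (u', v').
Proof. intros C. apply (parallel_ladder _ _ _ _ C). Qed.

Lemma separating_edge u v z a : adj u v -> halfspace u v z -> halfspace v u a ->
  exists s t, parallel u v s t /\ gdist z s + 1 + gdist t a = gdist z a.
Proof.
  intros Huv. remember (gdist z a) as n eqn:E. revert z E.
  induction n as [|n IH]; intros z E Hz Ha.
  - symmetry in E. apply gdist_eq0 in E; subst. exfalso; eapply halfspace_disjoint; eauto.
  - symmetry in E. destruct (gdist_succ _ _ _ E) as [z1 [Hz1 E1]].
    destruct (halfspace_cases u v z1 Huv) as [Hw|Hw].
    + destruct (IH z1 (eq_sym E1) Hw Ha) as [s [t [Hst Eq]]].
      exists s, t. split; auto. destruct Hst as (_ & Hst & _).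
      pose proof (gdist_triangle z z1 s). pose proof (gdist_adj _ _ Hz1).
      pose proof (gdist_triangle z s t). pose proof (gdist_triangle z t a).
      pose proof (gdist_adj _ _ Hst). lia.
    + exists z, z1. repeat split; auto. rewrite gdist_xx. pose proof (gdist_adj _ _ Hz1). lia.
Qed.

Lemma halfspace_convex u v a b c : adj u v -> halfspace u v a -> halfspace u v b ->
  gdist a c + gdist c b = gdist a b -> halfspace u v c.
Proof.
  intros Huv Ha Hb E. apply NNPP. intros Nc. apply halfspace_compl in Nc; auto.
  destruct (separating_edge u v a c Huv Ha Nc) as [s [t [C Eq]]].
  pose proof (parallel_halfspace _ _ _ _ C b) as Hb'. apply Hb' in Hb. unfold halfspace in Hb.
  destruct C as (_ & Hst & _).
  pose proof (gdist_triangle a s b). pose proof (gdist_triangle t c b).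
  pose proof (gdist_sym b t). pose proof (gdist_sym b s). pose proof (gdist_adj _ _ Hst). lia.
Qed.

Section Quadrants.
Variables a1 b1 a2 b2 : V.
Hypotheses (H1 : adj a1 b1) (H2 : adj a2 b2).

Definition opposite_quadrants b c : Prop :=
  halfspace b1 a1 b /\ halfspace a2 b2 b /\ halfspace a1 b1 c /\ halfspace b2 a2 c.

(* Stepping from [b] towards [q] stays in [a2]'s side by convexity, and enters [a1]'s side
   by minimality of [gdist b c]. *)
Lemma quadrant_step b c q : opposite_quadrants b c ->
  (forall b' c', opposite_quadrants b' c' -> gdist b c <= gdist b' c') ->
  halfspace a1 b1 q -> halfspace a2 b2 q ->
  exists t, adj b t /\ halfspace a1 b1 t /\ halfspace a2 b2 t.
Proof.
  intros (Bb & Ab & Ac & Bc) Hmin Aq Aq'.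
  destruct (median_gdist b c q) as [m (M1 & M2 & M3)].
  assert (Am' : halfspace a2 b2 m) by (eapply (halfspace_convex a2 b2 b q); eauto).
  assert (Am : halfspace a1 b1 m) by (eapply (halfspace_convex a1 b1 c q); eauto).
  assert (Nb : b <> m) by (intros ->; eapply halfspace_disjoint; eauto).
  destruct (gdist_neq _ _ Nb) as [j Ej]. destruct (gdist_succ _ _ _ Ej) as [t [Ht Et]].
  exists t. split; [exact Ht|]. split.
  - apply NNPP; intros N. apply halfspace_compl in N; auto.
    assert (At' : halfspace a2 b2 t)
      by (eapply (halfspace_convex a2 b2 b m); eauto; rewrite (gdist_adj _ _ Ht); lia).
    pose proof (gdist_triangle t m c).
    assert (gdist b c <= gdist t c) by (apply Hmin; repeat split; auto). lia.
  - eapply (halfspace_convex a2 b2 b m); eauto. rewrite (gdist_adj _ _ Ht). lia.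
Qed.
End Quadrants.

Lemma crossing_corner a1 b1 a2 b2 q1 q2 q3 q4 : adj a1 b1 -> adj a2 b2 ->
  halfspace a1 b1 q1 -> halfspace a2 b2 q1 -> halfspace b1 a1 q2 -> halfspace a2 b2 q2 ->
  halfspace a1 b1 q3 -> halfspace b2 a2 q3 -> halfspace b1 a1 q4 -> halfspace b2 a2 q4 ->
  exists s t1 t2, corner adj s t1 t2 /\ parallel a1 b1 t1 s /\ parallel a2 b2 s t2.
Proof.
  intros H1 H2 A1q1 A2q1 B1q2 A2q2 A1q3 B2q3 B1q4 B2q4.
  destruct (ex_least_nat (fun n => exists b c, opposite_quadrants a1 b1 a2 b2 b c /\ gdist b c = n))
    as [n [[b [c [Q En]]] Hmin]]; [exists (gdist q2 q3), q2, q3; repeat split; auto|].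
  subst n.
  assert (Hmin1 : forall b' c', opposite_quadrants a1 b1 a2 b2 b' c' -> gdist b c <= gdist b' c')
    by eauto.
  assert (Hmin2 : forall b' c', opposite_quadrants b2 a2 b1 a1 b' c' -> gdist b c <= gdist b' c')
    by (intros b' c' (? & ? & ? & ?); apply Hmin1; repeat split; auto).
  destruct (quadrant_step a1 b1 a2 b2 H1 H2 b c q1 Q Hmin1 A1q1 A2q1) as [t1 (Ht1 & A1t1 & A2t1)].
  pose proof Q as (B1b & A2b & A1c & B2c).
  destruct (quadrant_step b2 a2 b1 a1 (adj_sym _ _ H2) (adj_sym _ _ H1) b c q4
              ltac:(repeat split; auto) Hmin2 B2q4 B1q4) as [t2 (Ht2 & B2t2 & B1t2)].
  assert (N12 : t1 <> t2) by (intros ->; eapply halfspace_disjoint; eauto).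
  pose proof (gdist_path2 t1 b t2 (adj_sym _ _ Ht1) Ht2 N12).
  destruct (median_gdist t1 t2 c) as [m (K1 & K2 & K3)].
  assert (A1m : halfspace a1 b1 m) by (eapply (halfspace_convex a1 b1 t1 c); eauto).
  assert (B2m : halfspace b2 a2 m)
    by (eapply (halfspace_convex b2 a2 t2 c); eauto using adj_sym; rewrite (gdist_sym m t2); lia).
  assert (t1 <> m) by (intros <-; exact (halfspace_disjoint _ _ _ A2t1 B2m)).
  assert (t2 <> m) by (intros <-; exact (halfspace_disjoint _ _ _ A1m B1t2)).
  assert (b <> m) by (intros <-; exact (halfspace_disjoint _ _ _ A1m B1b)).
  destruct (gdist_neq t1 m) as [k1 Ek1]; auto. destruct (gdist_neq t2 m) as [k2 Ek2]; auto.
  pose proof (gdist_sym t2 m).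
  assert (E1 : gdist t1 m = 1) by lia. assert (E2 : gdist m t2 = 1) by lia.
  apply gdist_eq1 in E1. apply gdist_eq1 in E2.
  exists b, t1, t2. repeat split; auto using adj_sym.
  exists m. repeat split; auto using adj_sym.
Qed.

Lemma qpar_rev g e f : qpar adj g e f -> qpar adj g (snd e, fst e) (snd f, fst f).
Proof.
  induction 1 as [e f [H|H]| | |].
  - apply rst_step. left. destruct H as (a & b & c & e' & Sq & -> & ->).
    exists b, a, e', c. simpl. destruct Sq as (? & ? & ? & ? & ? & ?).
    repeat split; auto using adj_sym.
  - apply rst_step. right. unfold g_step in *. subst f. reflexivity.
  - apply rst_refl.
  - apply rst_sym; auto.
  - eapply rst_trans; eauto.
Qed.

Definition convex (S : V -> Prop) : Prop :=
  forall u v w, S u -> S v -> gdist u w + gdist w v = gdist u v -> S w.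

Lemma gate_exists (S : V -> Prop) p c0 : convex S -> S c0 ->
  exists c, S c /\ forall c', S c' -> gdist p c' = gdist p c + gdist c c'.
Proof.
  intros Hconv Hc0.
  destruct (ex_least_nat (fun n => exists c, S c /\ gdist p c = n)) as [n [[c [Hc <-]] Hmin]];
    [eauto|].
  exists c. split; [exact Hc|]. intros c' Hc'.
  destruct (median_gdist p c c') as [m (M1 & M2 & M3)].
  assert (Hm : S m) by (apply (Hconv c c' m); auto; rewrite (gdist_sym c m); lia).
  assert (gdist p c <= gdist p m) by (apply Hmin; eauto).
  assert (Z : gdist m c = 0) by lia. apply gdist_eq0 in Z. subst m. rewrite gdist_xx in *. lia.
Qed.

Definition iso (f f' : V -> V) : Prop :=
  (forall v, f' (f v) = v) /\ (forall v, f (f' v) = v) /\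
  (forall u v, adj u v <-> adj (f u) (f v)).

Lemma iso_sym f f' : iso f f' -> iso f' f.
Proof.
  intros (H1 & H2 & H3). repeat split; auto; intros Ha.
  - apply H3. rewrite !H2; auto.
  - apply H3 in Ha. rewrite !H2 in Ha; auto.
Qed.

Lemma iso_adj f f' u v : iso f f' -> adj u v -> adj (f u) (f v).
Proof. intros (_ & _ & H). apply H. Qed.

Lemma walk_map f f' x l y : iso f f' -> walk adj x l y -> walk adj (f x) (map f l) (f y).
Proof. intros I. induction 1; simpl; econstructor; eauto using iso_adj. Qed.

Lemma iso_gdist f f' a b : iso f f' -> gdist (f a) (f b) = gdist a b.
Proof.
  assert (Hle : forall f f' a b, iso f f' -> gdist (f a) (f b) <= gdist a b).
  { intros f0 f0' a0 b0 I. destruct (walk_gdist a0 b0) as [l [Hl E]].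
    pose proof (gdist_le_walk _ _ _ (walk_map _ _ _ _ _ I Hl)). rewrite length_map in *; lia. }
  intros I. pose proof (Hle _ _ a b I). pose proof (Hle _ _ (f a) (f b) (iso_sym _ _ I)).
  destruct I as (H1 & _). rewrite !H1 in *. lia.
Qed.

Lemma iso_halfspace f f' a b z : iso f f' -> (halfspace (f a) (f b) (f z) <-> halfspace a b z).
Proof. intros I. unfold halfspace. rewrite !(iso_gdist _ _ _ _ I). tauto. Qed.

Lemma iso_halfspace_inv f f' a b z : iso f f' -> (halfspace (f a) (f b) z <-> halfspace a b (f' z)).
Proof.
  intros I. rewrite <- (iso_halfspace _ _ a b (f' z) I). destruct I as (_ & H & _).
  rewrite H. tauto.
Qed.

Lemma iso_iter f f' k : iso f f' -> iso (Nat.iter k f) (Nat.iter k f').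
Proof.
  intros I. pose proof I as (H1 & H2 & H3).
  induction k as [|k (K1 & K2 & K3)]; [repeat split; simpl; tauto|].
  repeat split.
  - intros v. rewrite Nat.iter_succ_r. simpl. rewrite H1; auto.
  - intros v. rewrite Nat.iter_succ_r. simpl. rewrite H2; auto.
  - intros Ha. simpl. apply (proj1 (H3 _ _)), (proj1 (K3 _ _)); auto.
  - simpl. intros Ha. apply (proj2 (K3 _ _)), (proj2 (H3 _ _)); auto.
Qed.

Section NestedHalfspaces.
Variables (f f' : V -> V) (x x' z0 : V).
Hypotheses (Hf : iso f f') (Hxx : adj x x').
Hypothesis Hnest : forall z, halfspace (f x) (f x') z -> halfspace x x' z.
Hypotheses (Hz0 : halfspace x x' z0) (Nz0 : ~ halfspace (f x) (f x') z0).

Definition iter_halfspace k : V -> Prop := halfspace (Nat.iter k f x) (Nat.iter k f x').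

Lemma iter_adj k : adj (Nat.iter k f x) (Nat.iter k f x').
Proof. exact (iso_adj _ _ _ _ (iso_iter _ _ k Hf) Hxx). Qed.

Lemma iter_halfspace_succ k z : iter_halfspace (S k) z -> iter_halfspace k z.
Proof.
  unfold iter_halfspace. rewrite !Nat.iter_succ_r.
  rewrite !(iso_halfspace_inv _ _ _ _ _ (iso_iter _ _ k Hf)). apply Hnest.
Qed.

Lemma iter_halfspace_0 k z : iter_halfspace k z -> halfspace x x' z.
Proof. induction k; auto. intros H; apply IHk, iter_halfspace_succ, H. Qed.

Lemma iter_halfspace_strict k :
  iter_halfspace k (Nat.iter k f z0) /\ ~ iter_halfspace (S k) (Nat.iter k f z0).
Proof.
  pose proof (iso_iter _ _ k Hf) as Ik. unfold iter_halfspace. rewrite !Nat.iter_succ_r.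
  rewrite !(iso_halfspace _ _ _ _ _ Ik). auto.
Qed.

(* Each of the [k] strictly nested walls must be crossed on the way out. *)
Lemma iter_halfspace_gdist k : forall z a,
  iter_halfspace k z -> ~ halfspace x x' a -> k + 1 <= gdist z a.
Proof.
  induction k as [|k IH]; intros z a Hz Ha.
  - destruct (gdist z a) eqn:E; [|lia]. apply gdist_eq0 in E; subst; contradiction.
  - assert (Ha' : ~ iter_halfspace (S k) a) by (intros N; apply Ha, (iter_halfspace_0 _ _ N)).
    apply halfspace_compl in Ha'; [|apply iter_adj].
    destruct (separating_edge _ _ z a (iter_adj (S k)) Hz Ha') as [s [t [C Eq]]].
    destruct (classic (iter_halfspace k t)) as [Hk|Hk]; [specialize (IH t a Hk Ha); lia|].
    exfalso. destruct C as (Hadj & Hst & Hs & Ht).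
    assert (C' : parallel (Nat.iter k f x) (Nat.iter k f x') s t).
    { repeat split; [apply iter_adj | exact Hst | apply iter_halfspace_succ, Hs |].
      apply halfspace_compl; [apply iter_adj | exact Hk]. }
    assert (C : parallel (Nat.iter (S k) f x) (Nat.iter (S k) f x') s t) by (repeat split; auto).
    destruct (iter_halfspace_strict k) as [P1 P2]. apply P2.
    apply (parallel_halfspace _ _ _ _ C), (parallel_halfspace _ _ _ _ C'), P1.
Qed.

Lemma nested_halfspace_captures p : exists k, halfspace x x' (Nat.iter k f p).
Proof.
  apply NNPP. intros Hp. set (n := gdist x p).
  pose proof (iter_halfspace_gdist n (Nat.iter n f x) (Nat.iter n f p)
                (halfspace_self _ _ (iter_adj n)) (fun H => Hp (ex_intro _ n H))) as Hle.
  rewrite (iso_gdist _ _ _ _ (iso_iter _ _ n Hf)) in Hle. unfold n in Hle. lia.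
Qed.
End NestedHalfspaces.

Definition boundary u v c : Prop := halfspace v u c /\ exists c', adj c c' /\ halfspace u v c'.

Lemma boundary_convex u v : adj u v -> convex (boundary u v).
Proof.
  intros Huv a b w [Ba [a' [Ea Aa]]] [Bb [b' [Eb Ab]]] Ew.
  assert (Ca : parallel u v a' a) by (repeat split; auto using adj_sym).
  assert (Cb : parallel u v b' b) by (repeat split; auto using adj_sym).
  assert (Cab : parallel a' a b' b).
  { repeat split; auto using adj_sym.
    - apply (parallel_halfspace _ _ _ _ Ca); auto.
    - apply (parallel_halfspace_rev _ _ _ _ Ca); auto. }
  pose proof (parallel_gdist _ _ _ _ Cab).
  assert (Bw : halfspace v u w) by (apply (halfspace_convex v u a b w); auto using adj_sym).
  destruct (median_gdist w a' b') as [m (M1 & M2 & M3)].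
  assert (Am : halfspace u v m)
    by (apply (halfspace_convex u v a' b' m); auto; rewrite (gdist_sym a' m); lia).
  assert (w <> m) by (intros <-; eapply halfspace_disjoint; eauto).
  pose proof (gdist_triangle w a a'). pose proof (gdist_triangle w b b').
  rewrite (gdist_adj _ _ Ea), (gdist_adj _ _ Eb) in *.
  pose proof (gdist_sym a' m). pose proof (gdist_sym a' b'). pose proof (gdist_sym b w).
  pose proof (gdist_sym a w). destruct (gdist_neq w m) as [j Ej]; auto.
  assert (E1 : gdist w m = 1) by lia. apply gdist_eq1 in E1.
  split; eauto.
Qed.

Section Translation.
Variables g h : V -> V.
Hypothesis Hg : iso g h.
Hypothesis Nsi : ~ q_self_intersection adj g.
Hypothesis Nos : ~ q_one_sided adj g.

Definition displacement a : nat := gdist a (g a).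
Definition is_min a : Prop := forall y, displacement a <= displacement y.

Lemma is_min_g a : is_min a -> is_min (g a).
Proof. unfold is_min, displacement. intros H y. rewrite (iso_gdist _ _ _ _ Hg). apply H. Qed.

Lemma is_min_h a : is_min a -> is_min (h a).
Proof.
  unfold is_min, displacement. intros H y. destruct Hg as (_ & Hgh & _).
  rewrite <- (iso_gdist _ _ (h a) (g (h a)) Hg), Hgh. apply H.
Qed.

Lemma is_min_iter (f : V -> V) k a :
  (forall b, is_min b -> is_min (f b)) -> is_min a -> is_min (Nat.iter k f a).
Proof. intros Hf. induction k; simpl; auto. Qed.

Lemma gate_displacement (S : V -> Prop) p c : (forall z, S (g z) <-> S z) -> S c ->
  (forall c', S c' -> gdist p c' = gdist p c + gdist c c') ->
  displacement c <= displacement p.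
Proof.
  intros Sg Sc Gate. destruct Hg as (_ & Hgh & _).
  assert (Gate' : forall c', S c' -> gdist (g p) c' = gdist (g p) (g c) + gdist (g c) c').
  { intros c' Sc'. rewrite <- (Hgh c'), !(iso_gdist _ _ _ _ Hg).
    apply Gate, Sg. rewrite Hgh. exact Sc'. }
  unfold displacement. pose proof (Gate (g c) (proj2 (Sg c) Sc)). pose proof (Gate' c Sc).
  pose proof (gdist_triangle p (g p) (g c)). pose proof (gdist_triangle (g p) p c).
  rewrite (iso_gdist _ _ _ _ Hg) in *.
  pose proof (gdist_sym p (g p)). pose proof (gdist_sym c (g c)). lia.
Qed.

Lemma qpar_translate x x' : qpar adj g (x, x') (g x, g x').
Proof. apply rst_step. right. reflexivity. Qed.

Lemma no_crossing_translate x x' s t1 t2 :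
  parallel x x' t1 s -> parallel (g x) (g x') s t2 -> corner adj s t1 t2 -> False.
Proof.
  intros C1 C2 Co. apply Nsi. exists s, t1, t2. split; [exact Co|]. right.
  apply (qpar_rev _ (t1, s) (s, t2)).
  eapply rst_trans; [apply rst_sym, (parallel_qpar _ _ _ _ g C1)|].
  eapply rst_trans; [apply qpar_translate | exact (parallel_qpar _ _ _ _ g C2)].
Qed.

Lemma no_flip_translate x x' : parallel (g x) (g x') x' x -> False.
Proof.
  intros C. apply Nos. exists x, x'. split.
  - destruct C as (_ & H & _). apply adj_sym, H.
  - eapply rst_trans; [apply qpar_translate | exact (parallel_qpar _ _ _ _ g C)].
Qed.

Section EdgeTowardsMin.
Variables x x' p : V.
Hypothesis Hxx : adj x x'.
Hypothesis Hmin : forall a, is_min a -> halfspace x' x a.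
Hypothesis Hp : is_min p.

Lemma invariant_hyperplane : parallel x x' (g x) (g x') -> False.
Proof.
  intros C.
  assert (Ag : forall z, halfspace x x' (g z) <-> halfspace x x' z).
  { intros z. rewrite (parallel_halfspace _ _ _ _ C). apply (iso_halfspace _ _ _ _ _ Hg). }
  assert (Bg : forall z, halfspace x' x (g z) <-> halfspace x' x z).
  { intros z. rewrite (parallel_halfspace_rev _ _ _ _ C). apply (iso_halfspace _ _ _ _ _ Hg). }
  assert (boundary_g : forall z, boundary x x' (g z) <-> boundary x x' z).
  { pose proof Hg as (Hhg & Hgh & _). intros z. unfold boundary. rewrite Bg.
    split; intros [Bz [c' [E Ac']]]; split; auto.
    - exists (h c'). split; [rewrite <- (Hhg z); exact (iso_adj _ _ _ _ (iso_sym _ _ Hg) E)|].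
      rewrite <- Ag, Hgh. exact Ac'.
    - exists (g c'). split; [exact (iso_adj _ _ _ _ Hg E) | rewrite Ag; exact Ac']. }
  assert (Bx' : boundary x x' x')
    by (split; [apply halfspace_self, adj_sym; auto
               | exists x; auto using adj_sym, halfspace_self]).
  destruct (gate_exists _ p _ (boundary_convex _ _ Hxx) Bx') as [c [Bc Gate]].
  pose proof (gate_displacement _ p c boundary_g Bc Gate) as Dc.
  destruct Bc as [Bc [c' [Ec Ac']]].
  assert (Cc : parallel x x' c' c) by (repeat split; auto using adj_sym).
  assert (Cg : parallel c' c (g c') (g c)).
  { repeat split; [apply adj_sym, Ec | apply (iso_adj _ _ _ _ Hg), adj_sym, Ec | |].
    - apply (parallel_halfspace _ _ _ _ Cc). rewrite Ag. exact Ac'.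
    - apply (parallel_halfspace_rev _ _ _ _ Cc). rewrite Bg. exact Bc. }
  pose proof (parallel_gdist _ _ _ _ Cg).
  assert (Mc' : is_min c') by (intros y; specialize (Hp y); unfold displacement in *; lia).
  exact (halfspace_disjoint _ _ _ Ac' (Hmin c' Mc')).
Qed.

(* [f] strictly shrinks the side of [x] while preserving [Min(g)], which lies on the side of
   [x']; so some [f]-iterate of [p] would be on both sides. *)
Lemma no_strict_nesting f f' z0 : iso f f' -> (forall a, is_min a -> is_min (f a)) ->
  (forall z, halfspace (f x) (f x') z -> halfspace x x' z) ->
  halfspace x x' z0 -> ~ halfspace (f x) (f x') z0 -> False.
Proof.
  intros If Mf Hnest Hz0 Nz0.
  destruct (nested_halfspace_captures f f' x x' z0 If Hxx Hnest Hz0 Nz0 p) as [k Hk].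
  exact (halfspace_disjoint _ _ _ Hk (Hmin _ (is_min_iter f k p Mf Hp))).
Qed.

Lemma translate_halfspace_disjoint z :
  halfspace x x' z -> halfspace (g x) (g x') z -> False.
Proof.
  intros Az Agz. pose proof (iso_adj _ _ _ _ Hg Hxx) as Hgx.
  assert (Bgp : halfspace (g x') (g x) p)
    by (apply (iso_halfspace_inv _ _ _ _ _ Hg), Hmin, is_min_h, Hp).
  (* [z] and [p] lie in opposite quadrants of H and gH; according to which of the other two
     quadrants are empty, gH crosses H, is strictly nested with it, or equals it. *)
  destruct (classic (exists w, halfspace x' x w /\ halfspace (g x) (g x') w)) as [[w1 [B1 A2]]|N1];
  destruct (classic (exists w, halfspace x x' w /\ halfspace (g x') (g x) w)) as [[w2 [A1 B2]]|N2].
  - destruct (crossing_corner x x' (g x) (g x') z w1 w2 p) as (s & t1 & t2 & Co & C1 & C2);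
      auto.
    exact (no_crossing_translate _ _ _ _ _ C1 C2 Co).
  - apply (no_strict_nesting h g (h w1) (iso_sym _ _ Hg) is_min_h).
    + intros w Hw. apply (iso_halfspace_inv _ _ _ _ _ (iso_sym _ _ Hg)) in Hw.
      apply (iso_halfspace _ _ _ _ _ Hg). apply NNPP. intros N.
      apply N2. exists (g w). split; auto. apply halfspace_compl; auto.
    + pose proof Hg as (_ & Hgh & _). rewrite <- (iso_halfspace _ _ _ _ _ Hg), Hgh. exact A2.
    + rewrite (iso_halfspace _ _ _ _ _ (iso_sym _ _ Hg)).
      intros N. exact (halfspace_disjoint _ _ _ N B1).
  - apply (no_strict_nesting g h w2 Hg is_min_g).
    + intros w Hw. apply NNPP. intros N. apply N1. exists w. split; auto.
      apply halfspace_compl; auto.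
    + exact A1.
    + intros N. exact (halfspace_disjoint _ _ _ N B2).
  - apply invariant_hyperplane. repeat split; auto.
    + apply NNPP. intros N. apply N1. exists (g x).
      split; [apply halfspace_compl; auto | apply halfspace_self; auto].
    + apply halfspace_compl; auto. intros N. apply N2. exists (g x').
      split; [exact N | apply halfspace_self, adj_sym; auto].
Qed.

Lemma translate_separates : halfspace x' x (g x) /\ halfspace (g x') (g x) x'.
Proof.
  pose proof (iso_adj _ _ _ _ Hg Hxx) as Hgx. split.
  - apply halfspace_compl; auto. intros N.
    exact (translate_halfspace_disjoint _ N (halfspace_self _ _ Hgx)).
  - apply halfspace_compl; auto. intros N. apply (no_flip_translate x x').
    repeat split; auto using adj_sym.
    apply halfspace_compl; auto. intros N'.
    exact (translate_halfspace_disjoint _ (halfspace_self _ _ Hxx) N').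
Qed.
End EdgeTowardsMin.

Lemma displacement_gate p : is_min p -> forall x,
  (forall a, is_min a -> gdist x a = gdist x p + gdist p a) ->
  displacement x = 2 * gdist x p + displacement p.
Proof.
  intros Hp x. remember (gdist x p) as n eqn:E. revert x E.
  induction n as [|n IH]; intros x E Hgate.
  - symmetry in E. apply gdist_eq0 in E. subst. lia.
  - symmetry in E. destruct (gdist_succ _ _ _ E) as [x1 [Hx1 E1]].
    assert (Hgate1 : forall a, is_min a -> gdist x1 a = gdist x1 p + gdist p a).
    { intros a Ma. specialize (Hgate a Ma). pose proof (gdist_triangle x x1 a).
      pose proof (gdist_triangle x1 p a). rewrite (gdist_adj _ _ Hx1) in *. lia. }
    assert (Hmin : forall a, is_min a -> halfspace x1 x a).
    { intros a Ma. unfold halfspace. specialize (Hgate a Ma). pose proof (gdist_triangle x x1 a).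
      pose proof (gdist_triangle x1 p a). rewrite (gdist_adj _ _ Hx1) in *.
      rewrite (gdist_sym a x), (gdist_sym a x1). lia. }
    destruct (translate_separates x x1 p Hx1 Hmin Hp) as [K1 K2]. unfold halfspace in K1, K2.
    rewrite E1 in Hgate1. specialize (IH x1 (eq_sym E1) Hgate1). unfold displacement in *.
    rewrite (gdist_sym (g x) x), (gdist_sym (g x) x1) in K1. lia.
Qed.

Lemma in_Min_is_min a : in_Min adj g a <-> is_min a.
Proof.
  unfold is_min, displacement. split.
  - intros Ha y. apply (Ha y); apply dist_gdist.
  - intros Ha y n m Hn Hm. rewrite (dist_eq_gdist _ _ _ Hn), (dist_eq_gdist _ _ _ Hm). apply Ha.
Qed.

Lemma projection_gate x p : is_projection adj (in_Min adj g) x p ->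
  is_min p /\ forall a, is_min a -> gdist x a = gdist x p + gdist p a.
Proof.
  intros [Pmin Pgate]. split; [apply in_Min_is_min, Pmin|].
  intros a Ma. apply (Pgate a); [apply in_Min_is_min, Ma | apply dist_gdist ..].
Qed.
End Translation.

Lemma walk_app_in x l1 y l2 z : walk adj x l1 y -> In z (y :: l2) -> In z (x :: l1 ++ l2).
Proof. intros Hw Hin. induction Hw; simpl in *; auto. Qed.

End MedianGraph.

Theorem lemma3p5 (V : Type) (adj : V -> V -> Prop) (g : V -> V) (x p : V) :
  median_graph adj ->
  graph_automorphism adj g ->
  cospecial_Zaction adj g ->
  is_projection adj (in_Min adj g) x p ->
  exists q : list V, geodesic adj x q (g x) /\ In p (x :: q) /\ In (g p) (x :: q).
Proof.
  intros Hmed [[h [Hhg Hgh]] Hadj] (_ & Nsi & Nos & _) Hproj.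
  assert (Hg : iso V adj g h) by (repeat split; auto; apply Hadj).
  destruct (projection_gate V adj Hmed g x p Hproj) as [Hp Hgate].
  pose proof (displacement_gate V adj Hmed g h Hg Nsi Nos p Hp x Hgate) as Dx.
  unfold displacement in Dx.
  destruct (walk_gdist V adj Hmed x p) as [l1 [W1 L1]].
  destruct (walk_gdist V adj Hmed p (g p)) as [l2 [W2 L2]].
  destruct (walk_gdist V adj Hmed p x) as [l3 [W3 L3]].
  pose proof (walk_map V adj g h p l3 x Hg W3) as W3'.
  exists (l1 ++ l2 ++ map g l3). split; [|split].
  - apply (geodesic_gdist V adj Hmed); [do 2 (eapply walk_app; eauto)|].
    rewrite !length_app, length_map. rewrite (gdist_sym V adj Hmed p x) in L3. lia.
  - apply (walk_app_in V adj x l1 p); simpl; auto.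
  - apply (walk_app_in V adj x l1 p _ _ W1), (walk_app_in V adj p l2 (g p) _ _ W2). simpl; auto.
Qed.
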